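(* Let $\mathbb{P}(1:3:5)=\mathrm{Proj}\,\mathbb{C}[\mathfrak{A},\mathfrak{B},\mathfrak{C}]$ (weights $1,3,5$) and $\mathbb{P}(2:3:5:6)=\mathrm{Proj}\,\mathbb{C}[\alpha,\beta,\gamma,\delta]$ (weights $2,3,5,6$). A point $(\alpha:\beta:\gamma:\delta)\in\mathbb{P}(2:3:5:6)$ satisfies the modular equation $$(-\alpha^3-\beta^2+\delta)^2-4\alpha(\alpha\beta-\gamma)^2=0$$ if and only if it lies in the image of the embedding $\Psi_5:\mathbb{P}(1:3:5)\to\mathbb{P}(2:3:5:6)$ given by $$(\mathfrak{A}:\mathfrak{B}:\mathfrak{C})\mapsto\Big(\tfrac{25}{36}\mathfrak{A}^2:\ \tfrac12\big(-\tfrac{125}{108}\mathfrak{A}^3+\tfrac54\mathfrak{B}\big):\ \tfrac1{32}\mathfrak{C}:\ \tfrac{25}{64}\mathfrak{B}^2-\tfrac5{96}\mathfrak{A}\mathfrak{C}\Big).$$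
   Context: Here $\mathfrak{A},\mathfrak{B},\mathfrak{C}$ are coordinates (coming from Klein's icosahedral invariants) on the weighted projective plane $\mathbb{P}(1:3:5)$, which is the compactification (by one cusp $(1:0:0)$) of the symmetric Hilbert modular surface for $\mathbb{Q}(\sqrt5)$. The point $(\alpha:\beta:\gamma:\delta)$ parametrizes the elliptic K3 surface $y^2=x^3+(-3\alpha t^4-\gamma t^5)x+(t^5-2\beta t^6+\delta t^7)$; the given modular equation is the condition for this surface to admit an extra section making its Néron–Severi lattice $E_8(-1)\oplus E_8(-1)\oplus\begin{pmatrix}2&1\\1&-2\end{pmatrix}$. *)

(* The complex numbers are modelled as R[i] = complex R for
   an arbitrary R : realType (any realType is the real field). *)
From HB Require Import structures.
From mathcomp Require Import all_boot all_order all_algebra.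
From mathcomp Require Import complex.
From mathcomp Require Import reals.
Set Implicit Arguments. Unset Strict Implicit. Unset Printing Implicit Defensive.
Import Order.TTheory GRing.Theory Num.Theory.
Local Open Scope ring_scope.

Section Defs.
Variable R : realType.
Local Notation C := (R[i]).

(* A representative (a,b,c,d) in C^4 \ {0} of a point of P(2:3:5:6). *)
Definition nonzero4 (a b c d : C) : Prop :=
  ~ (a = 0 /\ b = 0 /\ c = 0 /\ d = 0).

(* A representative (A,B,C) in C^3 \ {0} of a point of P(1:3:5). *)
Definition nonzero3 (A B C' : C) : Prop :=
  ~ (A = 0 /\ B = 0 /\ C' = 0).

Definition wequiv2356 (a b c d a' b' c' d' : C) : Prop :=
  exists2 l : C, l != 0 &
    [/\ a' = l ^+ 2 * a, b' = l ^+ 3 * b, c' = l ^+ 5 * c & d' = l ^+ 6 * d].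

Definition modular_eq (a b c d : C) : C :=
  (- a ^+ 3 - b ^+ 2 + d) ^+ 2 - 4%:R * a * (a * b - c) ^+ 2.

Definition Psi5_1 (A B C' : C) : C := (25%:R / 36%:R) * A ^+ 2.
Definition Psi5_2 (A B C' : C) : C :=
  (1 / 2%:R) * (- (125%:R / 108%:R) * A ^+ 3 + (5%:R / 4%:R) * B).
Definition Psi5_3 (A B C' : C) : C := (1 / 32%:R) * C'.
Definition Psi5_4 (A B C' : C) : C :=
  (25%:R / 64%:R) * B ^+ 2 - (5%:R / 96%:R) * A * C'.

Definition in_image_Psi5 (a b c d : C) : Prop :=
  exists A B C' : C, nonzero3 A B C' /\
    wequiv2356 (Psi5_1 A B C') (Psi5_2 A B C') (Psi5_3 A B C') (Psi5_4 A B C')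
               a b c d.
End Defs.

From HB Require Import structures.
From mathcomp Require Import all_boot all_order all_algebra.
From mathcomp Require Import complex.
From mathcomp Require Import reals.
From mathcomp Require Import ring.
Import Order.TTheory GRing.Theory Num.Theory.
Local Open Scope ring_scope.

(* With u = -a^3 - b^2 + d and v = ab - c, the modular equation reads
   u^2 = 4 a v^2; for a square root t of a it factors as (u - 2tv)(u + 2tv).
   The map Psi_5 parametrizes exactly the representatives with a = t^2 and
   u = 2tv, where t = 5A/6: conversely, given such a t (and any zero of the
   modular equation has one, after choosing the sign of the square root),
   A, B, C are recovered linearly from t, b, c, and d is then forced by
   u = 2tv.  Weighted homogeneity of degree 12 makes the equation independent
   of the representative. *)

Section ModularEquation.
Context {R : realType}.
Local Notation C := R[i].

Lemma modular_eq_homog (l a b c d : C) :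
  modular_eq (l ^+ 2 * a) (l ^+ 3 * b) (l ^+ 5 * c) (l ^+ 6 * d)
  = l ^+ 12 * modular_eq a b c d.
Proof. by rewrite /modular_eq; ring. Qed.

Lemma modular_eq_factor {t a : C} (b c d : C) : t ^+ 2 = a ->
  modular_eq a b c d =
  (- a ^+ 3 - b ^+ 2 + d - 2%:R * t * (a * b - c)) *
  (- a ^+ 3 - b ^+ 2 + d + 2%:R * t * (a * b - c)).
Proof. by move=> <-; rewrite /modular_eq; ring. Qed.

Lemma modular_eq0_root (a b c d : C) :
  modular_eq a b c d = 0 ->
  exists2 t : C, t ^+ 2 = a & - a ^+ 3 - b ^+ 2 + d = 2%:R * t * (a * b - c).
Proof.
rewrite (modular_eq_factor b c d (sqrtCK a)) => /eqP; rewrite mulf_eq0.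
case/orP=> /eqP factor0.
- by exists (sqrtC a); rewrite ?sqrtCK //; apply/eqP; rewrite -subr_eq0 factor0.
- exists (- sqrtC a); first by rewrite sqrrN sqrtCK.
  by apply/eqP; rewrite -subr_eq0 -factor0; apply/eqP; ring.
Qed.

Lemma Psi5_root (A B C' : C) :
  let t := 5%:R / 6%:R * A in
  t ^+ 2 = Psi5_1 A B C' /\
  - Psi5_1 A B C' ^+ 3 - Psi5_2 A B C' ^+ 2 + Psi5_4 A B C'
  = 2%:R * t * (Psi5_1 A B C' * Psi5_2 A B C' - Psi5_3 A B C').
Proof.
by rewrite /Psi5_1 /Psi5_2 /Psi5_3 /Psi5_4; split; field; rewrite ?pnatr_eq0.
Qed.

Lemma modular_eq_Psi5 (A B C' : C) :
  modular_eq (Psi5_1 A B C') (Psi5_2 A B C') (Psi5_3 A B C') (Psi5_4 A B C') = 0.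
Proof.
have [square_t branch] := Psi5_root A B C'.
by rewrite (modular_eq_factor _ _ _ square_t) branch subrr mul0r.
Qed.

Lemma Psi5_preimage {t a b c d : C} :
  t ^+ 2 = a -> - a ^+ 3 - b ^+ 2 + d = 2%:R * t * (a * b - c) ->
  exists A B C' : C,
    [/\ a = Psi5_1 A B C', b = Psi5_2 A B C', c = Psi5_3 A B C'
      & d = Psi5_4 A B C'].
Proof.
move=> <- branch.
pose A := 6%:R / 5%:R * t.
pose B := 4%:R / 5%:R * (2%:R * b + 125%:R / 108%:R * A ^+ 3).
exists A, B, (32%:R * c).
have d_eq : d = 2%:R * t * (t ^+ 2 * b - c) + (t ^+ 2) ^+ 3 + b ^+ 2.
  by rewrite -branch; ring.
rewrite d_eq /Psi5_1 /Psi5_2 /Psi5_3 /Psi5_4 /B /A.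
by split; field; rewrite ?pnatr_eq0.
Qed.

Lemma Psi5_000 :
  [/\ Psi5_1 0 0 0 = 0 :> C, Psi5_2 0 0 0 = 0 :> C,
      Psi5_3 0 0 0 = 0 :> C & Psi5_4 0 0 0 = 0 :> C].
Proof. by rewrite /Psi5_1 /Psi5_2 /Psi5_3 /Psi5_4; split; ring. Qed.

End ModularEquation.

Theorem mainTheorem1 (R : realType) (a b c d : R[i]) :
  nonzero4 a b c d ->
  (modular_eq a b c d = 0 <-> in_image_Psi5 a b c d).
Proof.
move=> nz; split.
- case/modular_eq0_root=> t square_t branch.
  have [A [B [C' [ea eb ec ed]]]] := Psi5_preimage square_t branch.
  exists A, B, C'; split.
  + move=> [A0 [B0 C0]]; apply: nz.
    by have [] := Psi5_000 (R := R); rewrite ea eb ec ed A0 B0 C0 => -> -> -> ->.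
  + by exists 1; rewrite ?oner_neq0 // !expr1n !mul1r.
- case=> A [B [C' [_ [l _ [-> -> -> ->]]]]].
  by rewrite modular_eq_homog modular_eq_Psi5 mulr0.
Qed.
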